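(* Let $X$ and $Y$ be real Banach spaces with $Y$ reflexive. Let $F\colon X\to Y$ be a continuous function and let $L>0$. For each $y^*\in Y^*$ define $\phi_{y^*}\colon X\to\mathbb{R}$ by $\phi_{y^*}(x)=y^*(F(x))$. Suppose that for each $y^*\in Y^*$ with $\|y^*\|\le 1$, the function $\phi_{y^*}$ is Fréchet differentiable on $X$ and its derivative $\phi_{y^*}'\colon X\to X^*$ is $L$-Lipschitz continuous. Then $F$ is Fréchet differentiable on $X$ and its derivative $F'\colon X\to\mathcal{B}(X,Y)$ is $L$-Lipschitz continuous, i.e. $\|F'(x)-F'(y)\|\le L\|x-y\|$ for all $x,y\in X$ (operator norm on the left).
   Context: $X^*$, $Y^*$ denote the continuous dual spaces with dual norms; $\mathcal{B}(X,Y)$ is the space of bounded linear operators $X\to Y$ with the operator norm $\|T\|=\sup_{\|x\|\le 1}\|T(x)\|$. *)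

From HB Require Import structures.
From mathcomp Require Import all_boot all_order all_algebra.
From mathcomp Require Import all_classical all_reals all_analysis.
Set Implicit Arguments. Unset Strict Implicit. Unset Printing Implicit Defensive.
Import Order.TTheory GRing.Theory Num.Theory.
Import numFieldNormedType.Exports.
Local Open Scope classical_set_scope.
Local Open Scope ring_scope.

Definition is_dual (R : realType) (E : normedModType R) (f : E -> R^o) : Prop :=
  (forall (a : R) (u v : E), f (a *: u + v) = a * f u + f v) /\ continuous f.

(* Operator norm  ||T|| = sup_{||x|| <= 1} ||T x||  (used for bounded linear T;
   for T : E -> R^o this is the dual norm). *)
Definition opnorm (R : realType) (E F : normedModType R) (T : E -> F) : R :=
  sup [set `|T x| | x in [set x : E | `|x| <= 1]].

(* Reflexivity: the canonical embedding Y -> Y^** is onto, i.e. every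
   continuous (= bounded w.r.t. the dual norm) linear functional on Y^* is an
   evaluation functional. *)
Definition reflexive_space (R : realType) (E : normedModType R) : Prop :=
  forall Phi : (E -> R^o) -> R,
    (forall (a : R) (f g : E -> R^o), is_dual f -> is_dual g ->
        Phi (fun y => a * f y + g y) = a * Phi f + Phi g) ->
    (exists C : R, forall f : E -> R^o, is_dual f -> `|Phi f| <= C * opnorm f) ->
    exists y : E, forall f : E -> R^o, is_dual f -> Phi f = f y.

From HB Require Import structures.
From mathcomp Require Import all_boot all_order all_algebra.
From mathcomp Require Import all_classical all_reals all_analysis.
From mathcomp Require Import lra.
Import Order.TTheory GRing.Theory Num.Theory.
Import numFieldNormedType.Exports.
Local Open Scope classical_set_scope.
Local Open Scope ring_scope.

(* For fixed x and h, the map y* |-> (y* o F)'(x) h is linear on Y*, and the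
   Taylor estimate for y* o F (its derivative is L-Lipschitz) bounds it by
   (|F (x + h) - F x| + L |h|^2) |y*|; by reflexivity it is the evaluation at
   some D x h in Y.  Norming functionals (Hahn-Banach) turn the scalar
   estimates for the y* o F into vector ones:
   |F (x + h) - F x - D x h| <= L |h|^2 and |D x h - D z h| <= L |x - z| |h|.
   The first makes D x a bounded linear map and the Frechet derivative of F at
   x, the second is the Lipschitz bound on F'. *)

Section NormingFunctional.
Context {R : realType} {E : normedModType R}.

Definition sublinear (q : E -> R) :=
  (forall x y, q (x + y) <= q x + q y) /\
  (forall (s : R) x, 0 < s -> q (s *: x) = s * q x).

Lemma sublinear0 q : sublinear q -> q 0 = 0.
Proof. by move=> [_ qZ]; have := qZ 2 0 (ltr0Sn _ 1); rewrite scaler0; lra. Qed.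

Lemma sublinearZ q (s : R) x : sublinear q -> 0 <= s -> q (s *: x) = s * q x.
Proof.
move=> hq; rewrite le_eqVlt => /predU1P[<-|s0]; last exact: hq.2.
by rewrite scale0r mul0r sublinear0.
Qed.

Lemma sublinear_ge_oppnorm q x :
  sublinear q -> (forall z, q z <= `|z|) -> - `|x| <= q x.
Proof.
move=> hq qn; have := hq.1 x (- x); have := qn (- x).
rewrite subrr sublinear0 // normrN; lra.
Qed.

Lemma sublinear_linear q : sublinear q -> (forall y, q (- y) <= - q y) ->
  forall (a : R) u v, q (a *: u + v) = a * q u + q v.
Proof.
move=> hq qN.
have qNE y : q (- y) = - q y.
  apply/eqP; rewrite eq_le qN /=.
  by have := hq.1 y (- y); rewrite subrr sublinear0 //; lra.
have qD x y : q (x + y) = q x + q y.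
  apply/eqP; rewrite eq_le hq.1 /=.
  by have := hq.1 (x + y) (- y); rewrite addrK qNE; lra.
move=> a u v; rewrite qD; congr (_ + _).
have [a0|a0] := leP 0 a; first exact: sublinearZ.
by rewrite -[a]opprK scaleNr qNE sublinearZ ?oppr_ge0 ?ltW // mulNr !opprK.
Qed.

Section InfFamily.
Variables (I : Type) (D : set I) (Q : I -> E -> R).
Hypothesis Q_lb : forall i x, D i -> - `|x| <= Q i x.

Lemma inf_family_le {i x} : D i -> inf [set Q i x | i in D] <= Q i x.
Proof.
move=> Di; apply: ge_inf; last by exists i.
by exists (- `|x|) => _ [j Dj <-]; exact: Q_lb.
Qed.

Lemma le_inf_family x a : D !=set0 -> (forall i, D i -> a <= Q i x) ->
  a <= inf [set Q i x | i in D].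
Proof.
move=> [i Di] h; apply: lb_le_inf; first by exists (Q i x), i.
by move=> _ [j Dj <-]; exact: h.
Qed.

Lemma inf_family_sublinear : D !=set0 ->
  (forall i j x y, D i -> D j -> exists2 k, D k & Q k (x + y) <= Q i x + Q j y) ->
  (forall (s : R) i x, 0 < s -> D i -> exists2 j, D j & Q j (s *: x) <= s * Q i x) ->
  sublinear (fun x => inf [set Q i x | i in D]).
Proof.
move=> D0 QD QZ; set m := fun x => inf _.
have mZ (s : R) x : 0 < s -> m (s *: x) <= s * m x.
  move=> s0; rewrite -ler_pdivrMl //; apply: le_inf_family => // i Di.
  have [j Dj /(le_trans (inf_family_le Dj))] := QZ s i x s0 Di.
  by rewrite ler_pdivrMl.
split=> [x y|s x s0].
  suff: m (x + y) - m x <= m y by lra.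
  apply: le_inf_family => // j Dj; rewrite lerBlDr -lerBlDl.
  apply: le_inf_family => // i Di; rewrite lerBlDl -lerBlDr.
  have [k Dk /(le_trans (inf_family_le Dk))] := QD i j x y Di Dj.
  by rewrite lerBlDl addrC.
apply/eqP; rewrite eq_le mZ //=.
have := mZ s^-1 (s *: x); rewrite invr_gt0 scalerA mulVf ?gt_eqF // scale1r.
by rewrite -ler_pdivlMl // => ->.
Qed.

End InfFamily.

Arguments inf_family_le {I D Q} Q_lb {i x}.
Arguments inf_family_sublinear {I D Q}.

(* The one-dimensional step of Hahn-Banach: lowering [q] in the direction [y]. *)
Definition ray_inf (q : E -> R) (y x : E) :=
  inf [set q (x + t *: y) - t * q y | t in [set t : R | 0 <= t]].

Section RayInf.
Variables (q : E -> R) (y : E).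
Hypotheses (q_sub : sublinear q) (q_le_norm : forall z, q z <= `|z|).

Let ray_lb (t : R) x : 0 <= t -> - `|x| <= q (x + t *: y) - t * q y.
Proof.
move=> t0; have := q_sub.1 (x + t *: y) (- x); have := q_le_norm (- x).
by rewrite addrC addKr sublinearZ // normrN; lra.
Qed.

Lemma ray_inf_sublinear : sublinear (ray_inf q y).
Proof.
apply: inf_family_sublinear => //; first by exists 0 => /=.
- move=> t1 t2 x z /= t10 t20; exists (t1 + t2) => /=; first exact: addr_ge0.
  rewrite scalerDl addrACA.
  by have := q_sub.1 (x + t1 *: y) (z + t2 *: y); lra.
- move=> s t x s0 /= t0; exists (s * t) => /=; first exact: mulr_ge0 (ltW s0) t0.
  by rewrite -scalerA -scalerDr q_sub.2 //; lra.
Qed.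

Lemma ray_inf_le x : ray_inf q y x <= q x.
Proof.
apply: le_trans (inf_family_le ray_lb (lexx 0)) _.
by rewrite scale0r addr0 mul0r subr0.
Qed.

Lemma ray_inf_opp : ray_inf q y (- y) <= - q y.
Proof.
apply: le_trans (inf_family_le ray_lb ler01) _.
by rewrite scale1r addNr sublinear0 // mul1r sub0r.
Qed.

End RayInf.

Arguments ray_inf_sublinear {q y}.
Arguments ray_inf_le {q} y.
Arguments ray_inf_opp {q y}.

Definition norming_majorant (y0 : E) (q : E -> R) :=
  [/\ sublinear q, forall x, q x <= `|x| & q (- y0) <= - `|y0|].

Section MajorantChain.
Variables (y0 : E) (I : Type) (A : set I) (q : I -> E -> R).
Hypothesis A_majorant : forall i, A i -> norming_majorant y0 (q i).

Let majorant_ge_oppnorm i x : A i -> - `|x| <= q i x.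
Proof. by move=> /A_majorant[qs qn _]; exact: sublinear_ge_oppnorm. Qed.

Lemma inf_majorants_le i x : A i -> inf [set q j x | j in A] <= q i x.
Proof. exact: inf_family_le. Qed.

Lemma inf_chain_norming_majorant : A !=set0 ->
  (forall i j, A i -> A j -> (forall x, q i x <= q j x) \/ (forall x, q j x <= q i x)) ->
  norming_majorant y0 (fun x => inf [set q i x | i in A]).
Proof.
move=> [i0 Ai0] Atot; have [_ q0n q0y] := A_majorant _ Ai0.
split.
- apply: (inf_family_sublinear majorant_ge_oppnorm); first by exists i0.
  + move=> i j x y Ai Aj.
    have [[qis _ _] [qjs _ _]] := (A_majorant _ Ai, A_majorant _ Aj).
    have [ij|ji] := Atot _ _ Ai Aj.
    * by exists i => //; apply: le_trans (qis.1 x y) _; rewrite lerD2l; exact: ij.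
    * by exists j => //; apply: le_trans (qjs.1 x y) _; rewrite lerD2r; exact: ji.
  + move=> s i x s0 Ai; exists i => //.
    by have [[_ ->]] := A_majorant _ Ai.
- by move=> x; exact: le_trans (inf_majorants_le _ _ Ai0) (q0n x).
- exact: le_trans (inf_majorants_le _ _ Ai0) q0y.
Qed.

End MajorantChain.

Arguments inf_majorants_le {y0 I A q}.
Arguments inf_chain_norming_majorant {y0 I A q}.

(* Hahn-Banach for the norm, via Zorn: a minimal norming majorant is linear. *)
Lemma exists_norming_linear (y0 : E) : exists f : E -> R,
  [/\ forall (a : R) u v, f (a *: u + v) = a * f u + f v,
      forall x, `|f x| <= `|x| & f y0 = `|y0|].
Proof.
pose T := {q : E -> R | norming_majorant y0 q}.
pose above (p q : T) := `[< forall x, sval q x <= sval p x >].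
have norm_sub : sublinear (fun x : E => `|x|).
  by split=> [|s x s0]; [exact: ler_normD|rewrite normrZ gtr0_norm].
have norm_majorant : norming_majorant y0 (ray_inf (fun x => `|x|) y0).
  have norm_le (z : E) : `|z| <= `|z| := lexx _.
  split; [exact: ray_inf_sublinear|exact: ray_inf_le|].
  exact: (ray_inf_opp norm_sub norm_le).
have [[q [qs qn qy]] qmin] : exists q : T, premaximal above q.
  apply: (ZL_preorder (exist _ _ norm_majorant)).
  - by move=> p; apply/asboolP.
  - move=> p q r /asboolP pq /asboolP qr; apply/asboolP => x.
    exact: le_trans (qr x) (pq x).
  move=> A Atot; have [A0|] := pselect (A !=set0); last first.
    by move=> A0; exists (exist _ _ norm_majorant) => p Ap; case: A0; exists p.
  have A_majorant p : A p -> norming_majorant y0 (sval p) by case: p.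
  have Am := inf_chain_norming_majorant A_majorant A0.
  have /Am inf_majorant : forall p r, A p -> A r ->
      (forall x, sval p x <= sval r x) \/ (forall x, sval r x <= sval p x).
    by move=> p r Ap Ar; case: (Atot _ _ Ap Ar) => /asboolP; [right|left].
  exists (exist _ _ inf_majorant) => p Ap; apply/asboolP => x /=.
  exact: inf_majorants_le A_majorant _ _ Ap.
have qN y : q (- y) <= - q y.
  have ray_majorant : norming_majorant y0 (ray_inf q y).
    split; first exact: ray_inf_sublinear.
    - by move=> x; exact: le_trans (ray_inf_le y qs qn x) (qn x).
    - exact: le_trans (ray_inf_le y qs qn _) qy.
  have /asboolP /= q_le := qmin (exist _ _ ray_majorant) (asboolT (ray_inf_le y qs qn)).
  exact: le_trans (q_le _) (ray_inf_opp qs qn).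
exists q; split; [exact: sublinear_linear|move=> x|].
- by rewrite ler_norml qn andbT sublinear_ge_oppnorm.
- by have := qs.1 y0 (- y0); have := qn y0; rewrite subrr sublinear0 //; lra.
Qed.

End NormingFunctional.

Definition linear_of {R : realType} {V W : normedModType R} {f : V -> W}
  (f_lin : forall (a : R) u v, f (a *: u + v) = a *: f u + f v) : {linear V -> W} :=
  HB.pack_for {linear V -> W} f (GRing.isLinear.Build R V W *:%R f f_lin).

Section OperatorNorm.
Context {R : realType} {E W : normedModType R}.

Lemma opnorm_le_bound (f : E -> W) (c : R) : 0 <= c ->
  (forall y, `|f y| <= c * `|y|) -> opnorm f <= c.
Proof.
move=> c0 hf; apply: ge_sup; first by exists `|f 0|, 0 => //=; rewrite normr0.
move=> _ [x /= x1 <-]; apply: le_trans (hf x) _.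
by rewrite -[leRHS]mulr1 ler_wpM2l.
Qed.

Section Bounded.
Context {f : E -> W} {M : R}.
Hypothesis fM : forall y, `|f y| <= M * `|y|.

Lemma opnorm_ub x : `|x| <= 1 -> `|f x| <= opnorm f.
Proof.
move=> x1; apply: ub_le_sup; last by exists x.
exists `|M| => _ [z /= z1 <-]; apply: le_trans (fM z) _.
by rewrite (le_trans (ler_wpM2r (normr_ge0 z) (ler_norm M))) // ler_piMr.
Qed.

Lemma opnorm_ge0 : 0 <= opnorm f.
Proof. by apply: le_trans (normr_ge0 (f 0)) (opnorm_ub _ _); rewrite normr0. Qed.

Lemma normr_le_opnorm : (forall (a : R) u, f (a *: u) = a *: f u) ->
  forall y, `|f y| <= opnorm f * `|y|.
Proof.
move=> fZ y.
have [->|y0] := eqVneq y 0; first by rewrite -(scale0r 0) fZ !scale0r !normr0 mulr0.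
have ny : 0 < `|y| by rewrite normr_gt0.
have := opnorm_ub (`|y|^-1 *: y).
rewrite fZ !normrZ normrV ?unitfE ?normr_eq0 // normr_id mulVf ?gt_eqF //.
by rewrite ler_pdivrMl // mulrC => ->.
Qed.

End Bounded.

End OperatorNorm.

Section DualFunctional.
Context {R : realType} {E : normedModType R}.
Implicit Types f : E -> R^o.

Lemma dualD {f} u v : is_dual f -> f (u + v) = f u + f v.
Proof. by move=> [f_lin _]; have := f_lin 1 u v; rewrite scale1r mul1r. Qed.

Lemma dual0 {f} : is_dual f -> f 0 = 0.
Proof. by move=> df; have := dualD 0 0 df; rewrite addr0; lra. Qed.

Lemma dualZ {f} (a : R) u : is_dual f -> f (a *: u) = a * f u.
Proof. by move=> df; rewrite -[a *: u]addr0 df.1 dual0 // addr0. Qed.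

Lemma dualB {f} u v : is_dual f -> f (u - v) = f u - f v.
Proof. by move=> df; rewrite dualD // -scaleN1r dualZ // mulN1r. Qed.

Lemma dual_bounded {f} : is_dual f -> exists2 M, 0 < M & forall y, `|f y| <= M * `|y|.
Proof.
move=> [f_lin f_cont].
by have [M] := linear_lipschitz (f := linear_of f_lin) f_cont; exists M.
Qed.

Lemma normr_le_dual_opnorm {f} y : is_dual f -> `|f y| <= opnorm f * `|y|.
Proof.
move=> df; have [M _ fM] := dual_bounded df.
by apply: (normr_le_opnorm fM) => a u; exact: dualZ.
Qed.

Lemma dual_scale_unit {f} {M : R} : is_dual f -> 0 < M ->
  (forall y, `|f y| <= M * `|y|) ->
  exists g, [/\ is_dual g, forall y, `|g y| <= `|y| & f = fun y => M * g y].
Proof.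
move=> df M0 fM; exists (fun y => M^-1 * f y); split.
- split=> [a u v|y]; first by rewrite df.1 mulrDr mulrCA.
  by apply: cvgM; [exact: cvg_cst|exact: df.2].
- by move=> y; rewrite normrM normfV (gtr0_norm M0) ler_pdivrMl.
- by apply/funext => y; rewrite mulrA mulfV ?gt_eqF // mul1r.
Qed.

Lemma unit_dual_opnorm {f} : (forall y, `|f y| <= `|y|) -> opnorm f <= 1.
Proof. by move=> f1; apply: opnorm_le_bound => // y; rewrite mul1r. Qed.

Lemma norming_dual (y0 : E) :
  exists f, [/\ is_dual f, forall x, `|f x| <= `|x| & f y0 = `|y0|].
Proof.
have [f [f_lin f1 fy0]] := exists_norming_linear y0.
exists f; split => //; split => //.
apply: (@bounded_linear_continuous _ _ _ (linear_of f_lin)).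
apply/ex_bound; exists 1; apply/nbhs_norm0P; exists 1 => //= y /= y1.
exact: le_trans (f1 y) (ltW y1).
Qed.

Lemma dual_separates (v w : E) :
  (forall f, is_dual f -> (forall y, `|f y| <= `|y|) -> f v = f w) -> v = w.
Proof.
move=> fvw; have [f [df f1 f_norm]] := norming_dual (v - w).
by apply/eqP; rewrite -subr_eq0 -normr_eq0 -f_norm dualB // (fvw f df f1) subrr.
Qed.

End DualFunctional.

Lemma diff_lipschitz_taylor {R : realType} {E : normedModType R}
  {phi : E -> R^o} {K : R} :
  0 <= K -> (forall x, differentiable phi x) ->
  (forall x z h, `|'d phi x h - 'd phi z h| <= K * `|x - z| * `|h|) ->
  forall x h, `|phi (x + h) - phi x - 'd phi x h| <= K * `|h| ^+ 2.
Proof.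
move=> K0 dphi lip x h; set c := 'd phi x h.
pose g : R -> R^o := phi \o ((fun t : R => t *: h) + cst x) - ( *:%R^~ (c : R^o)).
have g_diff t : is_diff t g
    ('d phi (t *: h + x) \o ((fun s : R => s *: h) + 0) - ( *:%R^~ (c : R^o))).
  by apply: is_diffB; apply: is_diff_comp; exact: differentiableP.
have g_derive (t : R) : is_derive t 1 g ('d phi (t *: h + x) h - c).
  apply: DeriveDef; first exact: diff_derivable.
  rewrite deriveE // diff_val.
  change ('d phi (t *: h + x) (1 *: h + 0) - (1 : R) *: (c : R^o) =
          'd phi (t *: h + x) h - c).
  by rewrite scale1r addr0 scale1r.
have g_cont : {within `[0, 1], continuous g}.
  by apply: continuous_subspaceT => t; apply: differentiable_continuous.
have [t t01] := MVT_segment ler01 (fun t _ => g_derive t) g_cont.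
rewrite /g !fctE /= !scale1r !scale0r add0r !subr0 mulr1 (addrC h x) => mvt.
rewrite addrAC mvt (le_trans (lip _ _ _)) // addrK normrZ expr2 !mulrA.
move: t01; rewrite in_itv /= => /andP[t0 t1].
do 2!apply: ler_wpM2r => //.
by rewrite ger0_norm // ler_piMr.
Qed.

Section DifferentiableByDuality.
Context {R : realType} {X Y : normedModType R} {F : X -> Y} {L : R}.
Hypothesis L_gt0 : 0 < L.
Hypothesis dual_comp_lipschitz : forall ys : Y -> R^o, is_dual ys -> opnorm ys <= 1 ->
  (forall x : X, differentiable (ys \o F) x) /\
  (forall x z : X,
     opnorm (fun h : X => ('d (ys \o F) x : X -> R^o) h - ('d (ys \o F) z : X -> R^o) h)
       <= L * `|x - z|).
Implicit Types f g : Y -> R^o.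

Section UnitDual.
Context {g : Y -> R^o}.
Hypotheses (dg : is_dual g) (g1 : forall y, `|g y| <= `|y|).

Lemma unit_dual_comp_diff x : differentiable (g \o F) x.
Proof. by case: (dual_comp_lipschitz _ dg (unit_dual_opnorm g1)). Qed.

Lemma unit_dual_comp_lipschitz x z h :
  `|('d (g \o F) x : X -> R^o) h - ('d (g \o F) z : X -> R^o) h| <= L * `|x - z| * `|h|.
Proof.
have [_ g_lip] := dual_comp_lipschitz _ dg (unit_dual_opnorm g1).
have [k1 _ k1_bd] := linear_lipschitz (diff_continuous (unit_dual_comp_diff x)).
have [k2 _ k2_bd] := linear_lipschitz (diff_continuous (unit_dual_comp_diff z)).
pose dd h := ('d (g \o F) x : X -> R^o) h - ('d (g \o F) z : X -> R^o) h.
have dd_bd y : `|dd y| <= (k1 + k2) * `|y|.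
  by rewrite mulrDl; apply: le_trans (ler_normB _ _) _; exact: lerD.
have ddZ (a : R) u : dd (a *: u) = a *: dd u.
  by rewrite /dd !linearZ /= scalerBr scalerN.
apply: le_trans (normr_le_opnorm dd_bd ddZ h) _.
by apply: ler_wpM2r => //; exact: g_lip.
Qed.

Lemma unit_dual_comp_taylor x h :
  `|g (F (x + h)) - g (F x) - ('d (g \o F) x : X -> R^o) h| <= L * `|h| ^+ 2.
Proof.
apply: (diff_lipschitz_taylor (ltW L_gt0) unit_dual_comp_diff) => *.
exact: unit_dual_comp_lipschitz.
Qed.

Lemma unit_dual_comp_diff_bound x h :
  `|('d (g \o F) x : X -> R^o) h| <= `|F (x + h) - F x| + L * `|h| ^+ 2.
Proof.
rewrite -[X in `|X|](subKr (g (F (x + h)) - g (F x))).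
apply: le_trans (ler_normB _ _) _; apply: lerD; last exact: unit_dual_comp_taylor.
by rewrite -dualB.
Qed.

Lemma unit_dual_comp_scaled (M : R) x :
  is_diff x ((fun y => M * g y) \o F) (M *: ('d (g \o F) x : X -> R^o)).
Proof. by apply: is_diffZ; exact: differentiableP (unit_dual_comp_diff x). Qed.

End UnitDual.

Lemma dual_comp_diff {f} x : is_dual f -> differentiable (f \o F) x.
Proof.
move=> df; have [M M0 fM] := dual_bounded df.
have [g [dg g1 ->]] := dual_scale_unit df M0 fM.
by have [] := unit_dual_comp_scaled dg g1 M x.
Qed.

Lemma dual_comp_diff_bound f x h : is_dual f ->
  `|('d (f \o F) x : X -> R^o) h| <= (`|F (x + h) - F x| + L * `|h| ^+ 2) * opnorm f.
Proof.
move=> df; have [M M0 fM] := dual_bounded df.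
have opnorm_f_ge0 := opnorm_ge0 fM.
have [opnorm_f_gt0|] := ltP 0 (opnorm f); last first.
  move=> opnorm_f_le0; have opnorm_f0 : opnorm f = 0 by apply/le_anti/andP.
  have -> : f \o F = cst 0.
    apply/funext => y /=; apply/normr0_eq0/le_anti/andP; split=> //.
    by apply: le_trans (normr_le_dual_opnorm _ df) _; rewrite opnorm_f0 mul0r.
  by rewrite diff_cst opnorm_f0 mulr0 /= normr0.
have [g [dg g1 fE]] := dual_scale_unit df opnorm_f_gt0 (normr_le_dual_opnorm ^~ df).
have [_ dfE] := unit_dual_comp_scaled dg g1 (opnorm f) x.
rewrite {1}fE dfE /= normrM (gtr0_norm opnorm_f_gt0) mulrC ler_pM2r //.
exact: unit_dual_comp_diff_bound.
Qed.

Lemma dual_comp_diff_linear x h (a : R) f g : is_dual f -> is_dual g ->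
  ('d ((fun y => a * f y + g y) \o F) x : X -> R^o) h =
  a * ('d (f \o F) x : X -> R^o) h + ('d (g \o F) x : X -> R^o) h.
Proof.
move=> /(dual_comp_diff x)/differentiableP df /(dual_comp_diff x)/differentiableP dg.
have -> : (fun y => a * f y + g y) \o F = a *: (f \o F) + (g \o F) by [].
have dE : 'd (a *: (f \o F) + (g \o F)) x =
    a *: ('d (f \o F) x : X -> R^o) + 'd (g \o F) x :> (X -> R^o).
  exact: diff_val.
exact: (congr1 (fun T : X -> R^o => T h) dE).
Qed.

Lemma exists_dual_derivative : reflexive_space Y ->
  exists D : X -> X -> Y,
    forall x h f, is_dual f -> ('d (f \o F) x : X -> R^o) h = f (D x h).
Proof.
move=> Yr.
have /choice[D dual_D] : forall xh : X * X, exists v : Y,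
    forall f, is_dual f -> ('d (f \o F) (xh.1) : X -> R^o) xh.2 = f v.
  move=> [x h]; apply: (Yr (fun f => ('d (f \o F) x : X -> R^o) h)).
    by move=> a f g df dg; exact: dual_comp_diff_linear.
  by exists (`|F (x + h) - F x| + L * `|h| ^+ 2) => f df; exact: dual_comp_diff_bound.
by exists (fun x h => D (x, h)) => x h; exact: (dual_D (x, h)).
Qed.

Section Derivative.
Hypothesis F_cont : continuous F.
Context {D : X -> X -> Y}.
Hypothesis dual_D : forall x h f, is_dual f -> ('d (f \o F) x : X -> R^o) h = f (D x h).

Lemma D_linear x (a : R) u v : D x (a *: u + v) = a *: D x u + D x v.
Proof.
apply: dual_separates => f df _.
by rewrite df.1 -!(dual_D x _ f df) linearP.
Qed.

Lemma D_taylor x h : `|F (x + h) - F x - D x h| <= L * `|h| ^+ 2.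
Proof.
have [f [df f1 <-]] := norming_dual (F (x + h) - F x - D x h).
rewrite !dualB // -(dual_D x h f df); apply: le_trans (ler_norm _) _.
exact: unit_dual_comp_taylor.
Qed.

Lemma D_lipschitz x z h : `|D x h - D z h| <= L * `|x - z| * `|h|.
Proof.
have [f [df f1 <-]] := norming_dual (D x h - D z h).
rewrite dualB // -(dual_D x h f df) -(dual_D z h f df).
apply: le_trans (ler_norm _) _.
exact: unit_dual_comp_lipschitz.
Qed.

Lemma D_continuous x : continuous (linear_of (D_linear x)).
Proof.
apply: bounded_linear_continuous; apply/ex_bound; exists (1 + L).
have /nbhs0P F_near : \forall z \near x, `|F x - F z| <= 1.
  by apply: cvgr_dist_le; [exact: F_cont|exact: ltr01].
have small : \forall u \near (0 : X), `|u| < 1.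
  by apply/nbhs_norm0P; exists 1 => //=; exact: ltr01.
apply: filterS2 F_near small => u Fu u1 /=.
rewrite -[D x u](subKr (F (x + u) - F x)).
apply: le_trans (ler_normB _ _) _; apply: lerD; first by rewrite distrC.
apply: le_trans (D_taylor x u) _.
by apply: ler_piMr; [exact: ltW|apply: exprn_ile1 => //; exact: ltW].
Qed.

Lemma D_littleo x : F \o shift x = cst (F x) + linear_of (D_linear x) +o_ 0 id.
Proof.
apply/eqaddoP => eps eps_gt0.
apply/nbhs_norm0P; exists (eps / L) => /=; first by rewrite divr_gt0.
move=> u u_small; change (`|F (u + x) - (F x + D x u)| <= eps * `|u|).
rewrite opprD addrA (addrC u x); apply: le_trans (D_taylor x u) _.
rewrite expr2 mulrA ler_wpM2r //.
by rewrite mulrC -ler_pdivlMr // ltW.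
Qed.

Lemma D_derivative x : differentiable F x /\ 'd F x = D x :> (X -> Y).
Proof.
have dFE := diff_unique (D_continuous x) (D_littleo x).
split; last by rewrite dFE.
by apply/diff_locallyP; rewrite dFE; split; [exact: D_continuous|exact: D_littleo].
Qed.

End Derivative.

End DifferentiableByDuality.

Theorem lemma2p3 (R : realType) (X Y : completeNormedModType R)
  (F : X -> Y) (L : R) :
  reflexive_space Y ->
  continuous F ->
  0 < L ->
  (forall ys : Y -> R^o, is_dual ys -> opnorm ys <= 1 ->
     (forall x : X, differentiable (ys \o F) x) /\
     (forall x z : X,
        opnorm (fun h : X => ('d (ys \o F) x : X -> R^o) h - ('d (ys \o F) z : X -> R^o) h)
          <= L * `|x - z|)) ->
  (forall x : X, differentiable F x) /\
  (forall x z : X,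
     opnorm (fun h : X => ('d F x : X -> Y) h - ('d F z : X -> Y) h) <= L * `|x - z|).
Proof.
move=> Yr F_cont L_gt0 dual_comp_lip.
have [D dual_D] := exists_dual_derivative L_gt0 dual_comp_lip Yr.
have dF := D_derivative L_gt0 dual_comp_lip F_cont dual_D.
split=> [x|x z]; first by case: (dF x).
rewrite (dF x).2 (dF z).2.
apply: opnorm_le_bound => [|h]; first exact: mulr_ge0 (ltW L_gt0) (normr_ge0 _).
exact (D_lipschitz dual_comp_lip dual_D x z h).
Qed.
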